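(* Let $p$ be an odd prime. If $M$ and $N$ are discrete $A$-modules and $f:M\to N$ is a $\mathbb{Z}_{(p)}$-homomorphism which commutes with the action of $\Psi^q$, then $f$ is a homomorphism of $A$-modules.
   Context: $A$ is the ring of degree zero stable operations in $p$-local complex $K$-theory. Fix $q$ primitive mod $p^2$, $\Psi^q\in A$ the Adams operation, $q_i=q^{(-1)^i\lfloor i/2\rfloor}$, $\Theta_n(X)=\prod_{i=1}^n(X-q_i)$, $\Phi_n=\Theta_n(\Psi^q)$; every element of $A$ is uniquely a convergent sum $\sum_{n\ge0}a_n\Phi_n$ with $a_n\in\mathbb{Z}_{(p)}$, and $A_m=\{\sum_{n\ge m}a_n\Phi_n\}$. An $A$-module $M$ is discrete if each $x\in M$ satisfies $A_nx=0$ for some $n$. *)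

From HB Require Import structures.
From mathcomp Require Import all_boot all_order all_algebra ring_quotient.
From mathcomp Require Import boolp classical_sets functions.
From mathcomp Require Import ring lra.

Set Implicit Arguments.
Unset Strict Implicit.
Unset Printing Implicit Defensive.

Import Order.TTheory GRing.Theory Num.Theory.
Local Open Scope ring_scope.
Local Open Scope quotient_scope.

Definition Zp_pred (p : nat) : {pred rat} :=
  fun x => `[< exists (n d : int), [/\ d != 0, coprime `|d|%N p &
                                  x = n%:~R / d%:~R] >].

Lemma frac_sub (F : fieldType) (a b c d : F) : b != 0 -> d != 0 ->
  a / b - c / d = (a * d - c * b) / (b * d).
Proof. by move=> hb hd; field; rewrite hb hd. Qed.

Lemma frac_mul (F : fieldType) (a b c d : F) : b != 0 -> d != 0 ->
  a / b * (c / d) = (a * c) / (b * d).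
Proof. by move=> hb hd; field; rewrite hb hd. Qed.

Lemma Zp_pred_subring (p : nat) : subring_closed (Zp_pred p).
Proof.
split.
- apply/asboolP; exists 1, 1; split => //; first by rewrite coprime1n.
- move=> x y /asboolP [n1 [d1 [d10 c1 ->]]] /asboolP [n2 [d2 [d20 c2 ->]]].
  apply/asboolP; exists (n1 * d2 - n2 * d1), (d1 * d2); split.
  + by rewrite mulf_neq0.
  + by rewrite abszM coprimeMl c1 c2.
  + have h1 : (d1%:~R : rat) != 0 by rewrite intr_eq0.
    have h2 : (d2%:~R : rat) != 0 by rewrite intr_eq0.
    by rewrite rmorphB !rmorphM /= frac_sub.
- move=> x y /asboolP [n1 [d1 [d10 c1 ->]]] /asboolP [n2 [d2 [d20 c2 ->]]].
  apply/asboolP; exists (n1 * n2), (d1 * d2); split.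
  + by rewrite mulf_neq0.
  + by rewrite abszM coprimeMl c1 c2.
  + have h1 : (d1%:~R : rat) != 0 by rewrite intr_eq0.
    have h2 : (d2%:~R : rat) != 0 by rewrite intr_eq0.
    by rewrite !rmorphM /= frac_mul.
Qed.

HB.instance Definition _ (p : nat) :=
  GRing.isSubringClosed.Build rat (Zp_pred p) (Zp_pred_subring p).

Definition qi (q : int) (i : nat) : rat :=
  (q%:~R : rat) ^ (if odd i then - (i./2)%:Z else (i./2)%:Z).

Definition Theta (q : int) (n : nat) : {poly rat} :=
  \prod_(1 <= i < n.+1) ('X - (qi q i)%:P).

Definition primitive_mod (q : int) (m : nat) : Prop :=
  coprime `|q|%N m /\
  forall k : nat, (0 < k < totient m)%N -> ~ (q ^+ k = 1 %[mod m%:Z])%Z.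

(* The ring A = lim_n Z_(p)[X]/(Theta_n(X)), Psi^q <-> X.                    *)
(* An element is represented by a compatible sequence (r_n) of polynomials   *)
(* over Z_(p) with Theta_n | r_(n+1) - r_n (r_n = sum_{k<n} a_k Theta_k is   *)
(* the n-th partial sum of sum_k a_k Phi_k), modulo the ideal of sequences   *)
(* with Theta_n | r_n for all n.                                             *)
Section OperationRing.
Variables (p : nat) (q : int).

Definition compat_pred : {pred (nat -> {poly rat})} :=
  fun r => `[< forall n, r n \is a polyOver (Zp_pred p) /\
                         Theta q n %| r n.+1 - r n >].

Lemma compat_subring : subring_closed compat_pred.
Proof.
split.
- apply/asboolP => n; split; first exact: rpred1.
  by rewrite /= subrr dvdp0.
- move=> r s /asboolP hr /asboolP hs; apply/asboolP => n.
  have [hr1 hr2] := hr n; have [hs1 hs2] := hs n.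
  split; first by rewrite /= rpredB.
  have -> : (r \- s) n.+1 - (r \- s) n = (r n.+1 - r n) - (s n.+1 - s n).
    by rewrite /=; ring.
  exact: dvdp_sub.
- move=> r s /asboolP hr /asboolP hs; apply/asboolP => n.
  have [hr1 hr2] := hr n; have [hs1 hs2] := hs n.
  split; first by rewrite /= rpredM.
  have -> : (r \* s) n.+1 - (r \* s) n =
            (r n.+1 - r n) * s n.+1 + r n * (s n.+1 - s n).
    by rewrite /=; ring.
  by apply: dvdp_add; [apply: dvdp_mulr | apply: dvdp_mull].
Qed.

HB.instance Definition _ :=
  GRing.isSubringClosed.Build (nat -> {poly rat}) compat_pred compat_subring.

Record Cseq := MkCseq { cseq :> nat -> {poly rat}; _ : cseq \in compat_pred }.

HB.instance Definition _ := [isSub for cseq].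
HB.instance Definition _ := [Choice of Cseq by <:].
HB.instance Definition _ := [SubChoice_isSubComNzRing of Cseq by <:].

Definition null_pred : {pred Cseq} :=
  fun r => `[< forall n, Theta q n %| cseq r n >].

Lemma null_ideal : idealr_closed null_pred.
Proof.
split.
- by apply/asboolP => n; rewrite dvdp0.
- apply/negP => /asboolP /(_ 1%N).
  rewrite /Theta big_nat1 /= dvdp1 size_XsubC.
  done.
- move=> a u v /asboolP hu /asboolP hv; apply/asboolP => n.
  rewrite /= dvdp_add //; exact: dvdp_mull.
Qed.

HB.instance Definition _ := isIdealr.Build Cseq null_pred null_ideal.

(* The ring A of degree zero stable operations (p-local complex K-theory). *)
Definition A := {ideal_quot null_pred}.

(* Embedding of Z_(p) into A (junk value 0 outside Z_(p)). *)
Definition zpA (c : rat) : A := \pi_A (insubd (0 : Cseq) (fun _ : nat => c%:P) : Cseq).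

Definition Psi : A := \pi_A (insubd (0 : Cseq) (fun _ : nat => 'X) : Cseq).

Definition Phi (n : nat) : A := \prod_(1 <= i < n.+1) (Psi - zpA (qi q i)).

(* A_m = { sum_{n >= m} a_n Phi_n } : the elements whose partial sum of
   order m vanishes mod Theta_m. *)
Definition Afilt (m : nat) : {pred A} :=
  fun a => `[< exists r : Cseq, a = \pi_A r /\ Theta q m %| cseq r m >].

Definition discrete (M : lmodType A) : Prop :=
  forall x : M, exists n : nat, forall a : A, a \in Afilt n -> a *: x = 0.

End OperationRing.

From HB Require Import structures.
From mathcomp Require Import all_boot all_order all_algebra ring_quotient.
From mathcomp Require Import boolp classical_sets functions.

Set Implicit Arguments.
Unset Strict Implicit.
Unset Printing Implicit Defensive.

Import GRing.Theory.
Local Open Scope ring_scope.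
Local Open Scope quotient_scope.

(* An element a of A is congruent, modulo A_k, to the image of its k-th
   partial sum r_k, a polynomial over Z_(p) in Psi^q.  Since f commutes with
   Z_(p) and Psi^q it commutes with that polynomial, and by discreteness a
   suitable A_k kills both x and f x, so f (a x) = a f x. *)

Section ScaleCommute.
Variables (R : pzRingType) (M N : lmodType R) (f : M -> N).
Hypothesis f_add : forall x y : M, f (x + y) = f x + f y.

Definition scale_commute (a : R) := forall x : M, f (a *: x) = a *: f x.

Lemma additive_f0 : f 0 = 0.
Proof. by apply: (@addrI _ (f 0)); rewrite -f_add !addr0. Qed.

Lemma scale_commute0 : scale_commute 0.
Proof. by move=> x; rewrite !scale0r additive_f0. Qed.

Lemma scale_commuteD a b :
  scale_commute a -> scale_commute b -> scale_commute (a + b).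
Proof. by move=> fa fb x; rewrite !scalerDl f_add fa fb. Qed.

Lemma scale_commuteM a b :
  scale_commute a -> scale_commute b -> scale_commute (a * b).
Proof. by move=> fa fb x; rewrite -!scalerA fa fb. Qed.

Lemma scale_commute_at a b (x : M) :
  (a - b) *: x = 0 -> (a - b) *: f x = 0 -> f (b *: x) = b *: f x ->
  f (a *: x) = a *: f x.
Proof.
move=> kill_x kill_fx fb; rewrite -(subrK b a) scalerDl f_add fb kill_x.
by rewrite additive_f0 add0r scalerDl kill_fx add0r.
Qed.

End ScaleCommute.

Section Truncation.
Variables (p : nat) (q : int).

Definition cseq_const (P : {poly rat}) : Cseq p q :=
  insubd (0 : Cseq p q) (fun _ : nat => P).

Lemma val_cseq_const P : P \is a polyOver (Zp_pred p) ->
  val (cseq_const P) = (fun _ : nat => P).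
Proof.
move=> ZpP; rewrite insubdK //.
by apply/asboolP => n; rewrite subrr dvdp0.
Qed.

Lemma cseq_polyOver (r : Cseq p q) n : cseq r n \is a polyOver (Zp_pred p).
Proof. by have /asboolP /(_ n) [] := valP r. Qed.

Lemma Theta_dvd_leq m n : (m <= n)%N -> Theta q m %| Theta q n.
Proof.
move=> /subnKC <-; elim: (n - m)%N => [|i IH]; first by rewrite addn0.
apply: dvdp_trans IH _.
by rewrite addnS /Theta [X in _ %| X]big_nat_recr //= dvdp_mulr.
Qed.

Lemma Theta_dvd_cseqB (r : Cseq p q) m n :
  (m <= n)%N -> Theta q m %| cseq r n - cseq r m.
Proof.
move=> /subnKC <-; elim: (n - m)%N => [|i IH]; first by rewrite addn0 subrr dvdp0.
rewrite addnS -(subrK (cseq r (m + i)) (cseq r (m + i).+1)) -addrA dvdp_add //.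
have /asboolP /(_ (m + i)%N) [_ dvd_step] := valP r.
by apply: dvdp_trans dvd_step; rewrite Theta_dvd_leq ?leq_addr.
Qed.

Lemma truncation_Afilt (r : Cseq p q) j k : (j <= k)%N ->
  \pi_(A p q) r - \pi_(A p q) (cseq_const (cseq r k)) \in Afilt j.
Proof.
move=> le_jk; apply/asboolP; exists (r - cseq_const (cseq r k)).
split; first by rewrite rmorphB.
rewrite -[cseq _]/(val _) rmorphB /= val_cseq_const ?cseq_polyOver //.
by rewrite -opprB dvdpNr Theta_dvd_cseqB.
Qed.

Variables (M N : lmodType (A p q)) (f : M -> N).
Hypothesis f_add : forall x y : M, f (x + y) = f x + f y.
Hypothesis f_Zp : forall (c : rat) (x : M), c \in Zp_pred p ->
  f (zpA p q c *: x) = zpA p q c *: f x.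
Hypothesis f_Psi : forall x : M, f (Psi p q *: x) = Psi p q *: f x.

Lemma scale_commute_cseq_const P : P \is a polyOver (Zp_pred p) ->
  scale_commute f (\pi_(A p q) (cseq_const P)).
Proof.
elim/poly_ind: P => [|P c IH] ZpP.
  have -> : cseq_const 0 = 0 by apply: val_inj; rewrite val_cseq_const.
  by rewrite rmorph0; apply: scale_commute0.
have Zpc : c \in Zp_pred p.
  by move/polyOverP: ZpP => /(_ 0%N); rewrite coefD coefMX coefC add0r.
have ZpP' : P \is a polyOver (Zp_pred p).
  apply/polyOverP => i; move/polyOverP: ZpP => /(_ i.+1).
  by rewrite coefD coefMX coefC addr0.
have -> : cseq_const (P * 'X + c%:P) =
          cseq_const P * cseq_const 'X + cseq_const c%:P.
  by apply: val_inj; rewrite rmorphD rmorphM /= !val_cseq_const ?polyOverX ?polyOverC.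
rewrite rmorphD rmorphM /=.
apply: (scale_commuteD f_add); first apply: scale_commuteM (IH ZpP') _.
- by move=> x; apply: f_Psi.
- by move=> x; apply: f_Zp.
Qed.

End Truncation.

Theorem lemma2p6 (p : nat) (q : int)
  (p_prime : prime p) (p_odd : odd p) (q_prim : primitive_mod q (p ^ 2))
  (M N : lmodType (A p q))
  (M_discrete : discrete M) (N_discrete : discrete N)
  (f : M -> N)
  (f_add : forall x y : M, f (x + y) = f x + f y)
  (f_Zp : forall (c : rat) (x : M), c \in Zp_pred p ->
            f (zpA p q c *: x) = zpA p q c *: f x)
  (f_Psi : forall x : M, f (Psi p q *: x) = Psi p q *: f x) :
  forall (a : A p q) (x : M), f (a *: x) = a *: f x.
Proof.
move=> a x.
have [n kill_x] := M_discrete x.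
have [m kill_fx] := N_discrete (f x).
pose r := repr a; pose k := maxn n m.
pose b := \pi_(A p q) (cseq_const p q (cseq r k)).
have a_trunc j : (j <= k)%N -> a - b \in Afilt j.
  by rewrite -[a in a - _]reprK; apply: truncation_Afilt.
apply: (scale_commute_at f_add (b := b)).
- by apply: kill_x; rewrite a_trunc ?leq_maxl.
- by apply: kill_fx; rewrite a_trunc ?leq_maxr.
- exact: (scale_commute_cseq_const f_add f_Zp f_Psi (cseq_polyOver r k) x).
Qed.
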